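(* Let $\mathcal{H}$ be a Hilbert space, let $V\in\mathcal{B}(\mathcal{H})$ be a unilateral shift (i.e. a pure isometry), and let $X\in\mathcal{B}(\mathcal{H})$ satisfy $$\sup_{n\ge0}\Big\|\sum_{j=0}^{n}\big(V^{j+1}XV^{j}-V^{*\,j}XV^{*\,j+1}\big)\Big\|<\infty.$$ Then the equation $X=V^*Z-ZV$ has a bounded solution $Z\in\mathcal{B}(\mathcal{H})$.
   Context: A pure isometry is an isometry $V$ with no nonzero reducing subspace on which it is unitary; equivalently $V^{*n}\to0$ strongly. *)

From HB Require Import structures.
From mathcomp Require Import all_boot all_order all_algebra.
From mathcomp Require Import reals complex.
Set Implicit Arguments. Unset Strict Implicit. Unset Printing Implicit Defensive.
Import Order.TTheory GRing.Theory Num.Theory.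
Local Open Scope ring_scope.
Local Open Scope complex_scope.

Record hilbert (R : realType) := Hilbert {
  hcar :> lmodType R[i];
  hinner : hcar -> hcar -> R[i];
  hinnerD : forall x y z, hinner (x + y) z = hinner x z + hinner y z;
  hinnerZ : forall (a : R[i]) x y, hinner (a *: x) y = a * hinner x y;
  hinnerC : forall x y, hinner y x = (hinner x y)^*;
  hinner_ge0 : forall x, 0 <= hinner x x;
  hinner_eq0 : forall x, hinner x x = 0 -> x = 0;
  hcomplete : forall u : nat -> hcar,
    (forall e : R, 0 < e -> exists N, forall m n, (N <= m)%N -> (N <= n)%N ->
        Num.sqrt (complex.Re (hinner (u m - u n) (u m - u n))) < e) ->
    exists l, forall e : R, 0 < e -> exists N, forall n, (N <= n)%N ->
        Num.sqrt (complex.Re (hinner (u n - l) (u n - l))) < e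
}.

Section Ops.
Variables (R : realType) (H : hilbert R).

Definition hnorm (x : H) : R := Num.sqrt (complex.Re (hinner x x)).

Definition bounded_op (T : H -> H) : Prop :=
  (forall x y, T (x + y) = T x + T y) /\
  (forall (a : R[i]) x, T (a *: x) = a *: T x) /\
  (exists M : R, forall x, hnorm (T x) <= M * hnorm x).

Definition is_adjoint (T S : H -> H) : Prop :=
  forall x y, hinner (T x) y = hinner x (S y).

Definition isometry (V : H -> H) : Prop := forall x, hnorm (V x) = hnorm x.

(* pure isometry (unilateral shift), in the form V^{*n} -> 0 strongly,
   where Vs is the adjoint of V *)
Definition pure_isometry (V Vs : H -> H) : Prop :=
  isometry V /\
  forall x, forall e : R, 0 < e -> exists N, forall n, (N <= n)%N ->
     hnorm (iter n Vs x) < e.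

End Ops.

From Pilot Require Import Defs.
From HB Require Import structures.
From mathcomp Require Import all_boot all_order all_algebra.
From mathcomp Require Import reals complex.
From mathcomp Require Import boolp classical_sets.
From mathcomp Require Import ring lra zify.
Import Order.TTheory GRing.Theory Num.Theory.
Local Open Scope ring_scope.
Local Open Scope complex_scope.
Set Implicit Arguments. Unset Strict Implicit. Unset Printing Implicit Defensive.

(* Write S_n for the partial sums in the hypothesis. Telescoping gives
     V^* S_n - S_n V = 2X - V^{n+1} X V^{n+1} - V^{*(n+1)} X V^{*(n+1)},
   so Z should be half a limit of the bounded sequence S_n along which the last
   two terms vanish.  Weak compactness is replaced by compression with the
   projections Q_K = 1 - V^K V^{*K} onto ker V^{*K} ([Pker K]): Q_K S_n x converges
   as n -> oo, since Q_K S_n Q_M is eventually constant in n while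
   |Q_K S_n (1 - Q_M) x| <= B |V^{*M} x| -> 0 by purity.  The limits W_K
   ([Wtrunc K]) satisfy Q_K W_K' = W_K for K <= K', so by Pythagoras |W_K x|^2 is
   nondecreasing and bounded and W_K x converges to some W x.  As V^* Q_{K+1} =
   Q_K V^* and Q_K kills the range of V^{n+1}, compressing the telescoped identity
   gives Q_K (V^* W - W V - 2X) = 0 for every K, and Q_K -> 1 strongly. *)

Section HilbertSpace.
Variables (R : realType) (H : hilbert R).
Implicit Types (x y z : H) (a : R[i]) (T S : H -> H).

Lemma hinnerDr x y z : hinner x (y + z) = hinner x y + hinner x z.
Proof. by rewrite hinnerC hinnerD rmorphD /= -!hinnerC. Qed.

Lemma hinnerZr a x y : hinner x (a *: y) = conjc a * hinner x y.
Proof. by rewrite hinnerC hinnerZ rmorphM /= -hinnerC. Qed.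

Lemma hinner0l y : hinner 0 y = 0.
Proof. by rewrite -(scale0r (0 : H)) hinnerZ mul0r. Qed.

Lemma hinner0r x : hinner x 0 = 0.
Proof. by rewrite hinnerC hinner0l conjc0. Qed.

Lemma hinnerBl x y z : hinner (x - y) z = hinner x z - hinner y z.
Proof. by apply/eqP; rewrite eq_sym subr_eq -hinnerD subrK. Qed.

Lemma hinnerBr x y z : hinner x (y - z) = hinner x y - hinner x z.
Proof. by rewrite hinnerC hinnerBl rmorphB /= -!hinnerC. Qed.

Lemma hinner_eqr y y' : (forall x, hinner x y = hinner x y') -> y = y'.
Proof.
by move=> h; apply/eqP; rewrite -subr_eq0; apply/eqP/hinner_eq0; rewrite hinnerBr h subrr.
Qed.

Definition hnorm2 x : R := complex.Re (hinner x x).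

Lemma hinnerxx x : hinner x x = (hnorm2 x)%:C.
Proof.
have := hinner_ge0 x; rewrite lecE /= => /andP[/eqP Im0 _].
by rewrite /hnorm2; case: (hinner x x) Im0 => ? ? /= ->.
Qed.

Lemma hnorm2_ge0 x : 0 <= hnorm2 x.
Proof. by have := hinner_ge0 x; rewrite hinnerxx lecR. Qed.

Lemma hnorm2_eq0 x : hnorm2 x = 0 -> x = 0.
Proof. by move=> h; apply: hinner_eq0; rewrite hinnerxx h. Qed.

Lemma Re_realM (t : R) a : complex.Re (t%:C * a) = t * complex.Re a.
Proof. by case: a => ? ? /=; rewrite mul0r subr0. Qed.

Lemma Re_conjc a : complex.Re (conjc a) = complex.Re a.
Proof. by case: a. Qed.

Lemma hnorm2D x y : hnorm2 (x + y) = hnorm2 x + hnorm2 y + 2 * complex.Re (hinner x y).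
Proof. by rewrite /hnorm2 hinnerD !hinnerDr (hinnerC x y) !raddfD /= Re_conjc; lra. Qed.

Lemma hnorm2B x y : hnorm2 (x - y) = hnorm2 x + hnorm2 y - 2 * complex.Re (hinner x y).
Proof. by rewrite /hnorm2 hinnerBl !hinnerBr (hinnerC x y) !raddfB /= Re_conjc; lra. Qed.

Lemma hinnerZr_real (t : R) x y : hinner x (t%:C *: y) = t%:C * hinner x y.
Proof. by rewrite hinnerZr; congr (_ * _); rewrite /conjc /= oppr0. Qed.

Lemma hnorm2Z a x : hnorm2 (a *: x) = complex.Re `|a| ^+ 2 * hnorm2 x.
Proof.
rewrite /hnorm2 hinnerZ hinnerZr hinnerxx normc_def /= sqr_sqrtr; last first.
  by rewrite addr_ge0 ?sqr_ge0.
by case: a => p q /=; rewrite !(mulr0, mul0r, subr0, addr0, oppr0); ring.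
Qed.

Lemma Re_norm_ge0 a : 0 <= complex.Re `|a|.
Proof. by rewrite normc_def sqrtr_ge0. Qed.

Lemma hnorm2Zr (t : R) x : hnorm2 (t%:C *: x) = t ^+ 2 * hnorm2 x.
Proof. by rewrite hnorm2Z normc_def /= expr0n addr0 sqrtr_sqr real_normK ?num_real. Qed.

Lemma hnorm_ge0 x : 0 <= hnorm x.
Proof. exact: sqrtr_ge0. Qed.

Lemma sqr_hnorm x : hnorm x ^+ 2 = hnorm2 x.
Proof. by rewrite sqr_sqrtr // hnorm2_ge0. Qed.

Lemma hnorm_eq0 x : hnorm x = 0 -> x = 0.
Proof. by move=> h; apply: hnorm2_eq0; rewrite -sqr_hnorm h expr0n. Qed.

Lemma hnormZ a x : hnorm (a *: x) = complex.Re `|a| * hnorm x.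
Proof.
rewrite /hnorm -!/(hnorm2 _) hnorm2Z sqrtrM ?sqr_ge0 //.
by rewrite sqrtr_sqr ger0_norm ?Re_norm_ge0.
Qed.

Lemma hnorm0 : hnorm (0 : H) = 0.
Proof. by rewrite -(scale0r (0 : H)) hnormZ normr0 mul0r. Qed.

Lemma hnormN x : hnorm (- x) = hnorm x.
Proof. by rewrite -scaleN1r hnormZ normrN normr1 mul1r. Qed.

Lemma hdistC x y : hnorm (x - y) = hnorm (y - x).
Proof. by rewrite -opprB hnormN. Qed.

Lemma Re_hinner_le x y : complex.Re (hinner x y) <= hnorm x * hnorm y.
Proof.
have [|nz] := eqVneq (hnorm x * hnorm y) 0.
  move=> /eqP; rewrite mulf_eq0 => /orP[] /eqP /hnorm_eq0 ->.
    by rewrite hinner0l hnorm0 mul0r.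
  by rewrite hinner0r hnorm0 mulr0.
have pos : 0 < hnorm x * hnorm y by rewrite lt_neqAle eq_sym nz mulr_ge0 ?hnorm_ge0.
(* [0 <= | |y| x - |x| y |^2] reads [0 <= 2 |x||y| (|x||y| - Re <x, y>)] *)
have := hnorm2_ge0 ((hnorm y)%:C *: x - (hnorm x)%:C *: y).
rewrite hnorm2B !hnorm2Zr hinnerZ hinnerZr_real !Re_realM -!sqr_hnorm.
nra.
Qed.

Lemma hnormD x y : hnorm (x + y) <= hnorm x + hnorm y.
Proof.
rewrite -(ler_pXn2r (_ : 0 < 2)%N) ?nnegrE ?addr_ge0 ?hnorm_ge0 //.
rewrite sqr_hnorm hnorm2D -!sqr_hnorm sqrrD.
have := Re_hinner_le x y; lra.
Qed.

Lemma hnormB_le x y : hnorm (x - y) <= hnorm x + hnorm y.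
Proof. by rewrite -(hnormN y) hnormD. Qed.

Lemma hnorm_tri x y z : hnorm (x - z) <= hnorm (x - y) + hnorm (y - z).
Proof. by rewrite -(subrKA y) hnormD. Qed.

Lemma morphD0 T : {morph T : x y / x + y} -> T 0 = 0.
Proof. by move=> TD; apply: (addrI (T 0)); rewrite -TD !addr0. Qed.

Lemma morphDB T : {morph T : x y / x + y} -> {morph T : x y / x - y}.
Proof. by move=> TD x y; apply/eqP; rewrite eq_sym subr_eq -TD subrK. Qed.

Lemma iter_morphD n T : {morph T : x y / x + y} -> {morph iter n T : x y / x + y}.
Proof. by move=> TD; elim: n => // n IH x y /=; rewrite IH TD. Qed.

Lemma iter_scalable n T : (forall a x, T (a *: x) = a *: T x) ->
  forall a x, iter n T (a *: x) = a *: iter n T x.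
Proof. by move=> TZ a x; elim: n => //= n ->. Qed.

Lemma adjoint_morphD T S : is_adjoint T S -> {morph S : x y / x + y}.
Proof. by move=> TS x y; apply: hinner_eqr => z; rewrite -TS !hinnerDr -!TS. Qed.

Lemma adjoint_scalable T S : is_adjoint T S -> forall a y, S (a *: y) = a *: S y.
Proof. by move=> TS a y; apply: hinner_eqr => z; rewrite -TS !hinnerZr -TS. Qed.

Lemma adjoint_iter n T S : is_adjoint T S -> is_adjoint (iter n T) (iter n S).
Proof. by move=> TS; elim: n => // n IH x y; rewrite /= TS IH -iterSr. Qed.

(* Qualified: MathComp's sesquilinear [isometry] shadows the one of [Defs]. *)
Lemma isometry_iter n T : Defs.isometry T -> Defs.isometry (iter n T).
Proof. by move=> TI; elim: n => // n IH x /=; rewrite TI IH. Qed.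

Lemma adjoint_isometry_contraction T S : Defs.isometry T -> is_adjoint T S ->
  forall y, hnorm (S y) <= hnorm y.
Proof.
move=> TI TS y.
have := Re_hinner_le (T (S y)) y; rewrite TS -/(hnorm2 _) -sqr_hnorm TI.
have := hnorm_ge0 (S y); have := hnorm_ge0 y; nra.
Qed.

Lemma adjoint_isometryK T S : Defs.isometry T -> is_adjoint T S -> cancel T S.
Proof.
move=> TI TS x; apply/eqP; rewrite -subr_eq0; apply/eqP/hnorm2_eq0.
have ReSTx : complex.Re (hinner (S (T x)) x) = hnorm2 x.
  by rewrite hinnerC -TS Re_conjc -/(hnorm2 _) -!sqr_hnorm TI.
have le_STx : hnorm2 (S (T x)) <= hnorm2 x.
  rewrite -!sqr_hnorm -(TI x).
  have := adjoint_isometry_contraction TI TS (T x); have := hnorm_ge0 (S (T x)); nra.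
apply/eqP; rewrite eq_le hnorm2_ge0 andbT hnorm2B ReSTx; lra.
Qed.

Definition hcvg (u : nat -> H) (l : H) := forall e : R, 0 < e ->
  exists N, forall n, (N <= n)%N -> hnorm (u n - l) < e.

Definition hcauchy (u : nat -> H) := forall e : R, 0 < e ->
  exists N, forall m n, (N <= m)%N -> (N <= n)%N -> hnorm (u m - u n) < e.

Definition hlim (u : nat -> H) : H := xget 0 (hcvg u).

Lemma hlimP u : hcauchy u -> hcvg u (hlim u).
Proof. by move=> /hcomplete; apply: xgetPex. Qed.

Lemma hcvgE u l : hcvg u l <-> hcvg (fun n => u n - l) 0.
Proof. by split=> h e /h [N hN]; exists N => n /hN; rewrite subr0. Qed.

Lemma hcvg0_le u v (C : R) : (forall n, hnorm (u n) <= C * hnorm (v n)) ->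
  hcvg v 0 -> hcvg u 0.
Proof.
move=> uv hv e e_gt0.
have C1_gt0 : 0 < `|C| + 1 by rewrite ltr_pwDr // normr_ge0.
have [N hN] := hv _ (divr_gt0 e_gt0 C1_gt0).
exists N => n /hN; rewrite !subr0 ltr_pdivlMr // => lt_v.
apply: le_lt_trans (uv n) _.
have := hnorm_ge0 (v n); have := ler_norm C; nra.
Qed.

Lemma hcvg_unique u l l' : hcvg u l -> hcvg u l' -> l = l'.
Proof.
move=> hl hl'; apply/eqP; rewrite -subr_eq0; apply/eqP/hnorm_eq0/eqP.
rewrite eq_le hnorm_ge0 andbT; apply/ler_addgt0Pr => e e_gt0; rewrite add0r.
have [N hN] := hl _ (divr_gt0 e_gt0 (ltr0Sn _ 1)).
have [N' hN'] := hl' _ (divr_gt0 e_gt0 (ltr0Sn _ 1)).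
have := hN _ (leq_maxl N N'); have := hN' _ (leq_maxr N N').
have := hnorm_tri l (u (maxn N N')) l'; rewrite (hdistC l (u _)); lra.
Qed.

Lemma hcvg_eq_near u v l : (exists N, forall n, (N <= n)%N -> u n = v n) ->
  hcvg u l -> hcvg v l.
Proof.
move=> [M uv] hu e /hu [N hN]; exists (maxn M N) => n; rewrite geq_max => /andP[Mn Nn].
by rewrite -uv //; apply: hN.
Qed.

Lemma hcvg_cst l : hcvg (fun _ => l) l.
Proof. by move=> e e_gt0; exists 0%N => n _; rewrite subrr hnorm0. Qed.

Lemma hcvgS u l : hcvg u l -> hcvg (fun n => u n.+1) l.
Proof. by move=> hu e /hu [N hN]; exists N => n Nn; apply/hN/leqW. Qed.

Lemma hcvgD u v l k : hcvg u l -> hcvg v k -> hcvg (fun n => u n + v n) (l + k).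
Proof.
move=> hu hv e e_gt0.
have [N hN] := hu _ (divr_gt0 e_gt0 (ltr0Sn _ 1)).
have [N' hN'] := hv _ (divr_gt0 e_gt0 (ltr0Sn _ 1)).
exists (maxn N N') => n; rewrite geq_max => /andP[/hN lt_u /hN' lt_v].
rewrite opprD addrACA; apply: le_lt_trans (hnormD _ _) _; lra.
Qed.

Lemma hcvgN u l : hcvg u l -> hcvg (fun n => - u n) (- l).
Proof.
move=> /hcvgE hu; apply/hcvgE; apply: (hcvg0_le (C := 1)) hu => n.
by rewrite -opprD hnormN mul1r.
Qed.

Lemma hcvgB u v l k : hcvg u l -> hcvg v k -> hcvg (fun n => u n - v n) (l - k).
Proof. by move=> hu /hcvgN; apply: hcvgD. Qed.

Lemma hcvg_le u l (c : R) : (forall n, hnorm (u n) <= c) -> hcvg u l -> hnorm l <= c.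
Proof.
move=> le_u hu; apply/ler_addgt0Pr => e /hu [N /(_ N (leqnn N))].
have := le_u N; have := hnorm_tri l (u N) 0; rewrite !subr0 hdistC; lra.
Qed.

Definition bounded_linear (C : R) T :=
  [/\ {morph T : x y / x + y}, forall a x, T (a *: x) = a *: T x
    & forall x, hnorm (T x) <= C * hnorm x].

Lemma bounded_linear_op C T : bounded_linear C T -> bounded_op T.
Proof. by case=> TD TZ Tb; split=> //; split=> //; exists C. Qed.

Lemma bounded_linear_scale a : bounded_linear (complex.Re `|a|) ( *:%R a).
Proof.
split=> [x y|b x|x] /=.
- exact: scalerDr.
- by rewrite !scalerA mulrC.
- by rewrite hnormZ.
Qed.

Lemma bounded_linear_comp C C' T T' : 0 <= C' ->
  bounded_linear C T -> bounded_linear C' T' -> bounded_linear (C' * C) (T' \o T).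
Proof.
move=> C'_ge0 [TD TZ Tb] [T'D T'Z T'b]; split=> [x y|a x|x] /=.
- by rewrite TD T'D.
- by rewrite TZ T'Z.
- by rewrite -mulrA; apply: le_trans (T'b _) _; rewrite ler_wpM2l.
Qed.

Lemma hcvg_bounded_linear C T u l : bounded_linear C T ->
  hcvg u l -> hcvg (fun n => T (u n)) (T l).
Proof.
move=> [TD _ Tb] /hcvgE hu; apply/hcvgE; apply: hcvg0_le hu => n.
by rewrite -morphDB.
Qed.

Lemma bounded_linear_lim C (T : nat -> H -> H) L :
  (forall x, hcvg (fun n => T n x) (L x)) -> (forall n, bounded_linear C (T n)) ->
  bounded_linear C L.
Proof.
move=> TL Tn; split=> [x y|a x|x].
- apply: hcvg_unique (TL (x + y)) _; apply: hcvg_eq_near (hcvgD (TL x) (TL y)).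
  by exists 0%N => n _; case: (Tn n) => ->.
- apply: hcvg_unique (TL (a *: x)) _.
  apply: hcvg_eq_near (hcvg_bounded_linear (bounded_linear_scale a) (TL x)).
  by exists 0%N => n _; case: (Tn n) => _ ->.
- by apply: hcvg_le (TL x) => n; case: (Tn n).
Qed.

End HilbertSpace.

Lemma sumr_telescope_ord (V : zmodType) n (f : nat -> V) :
  \sum_(j < n) (f j - f j.+1) = f 0%N - f n.
Proof.
rewrite -opprB -telescope_sumr // -sumrN big_mkord.
by apply: eq_bigr => j _; rewrite opprB.
Qed.

Lemma ubounded_almost_max (R : realType) (a : nat -> R) (b : R) :
  (forall n, a n <= b) -> forall e, 0 < e -> exists N, forall n, a n < a N + e.
Proof.
move=> a_le_b e e_gt0.
have a_sup : has_sup (range a) by split; [exists (a 0%N) | exists b => _ [n _ <-]].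
have [_ [N _ <-] lt_aN] := sup_adherent e_gt0 a_sup.
exists N => n; have : a n <= sup (range a) by apply: sup_upper_bound => //; exists n.
lra.
Qed.

Section PureIsometry.
Variables (R : realType) (H : hilbert R) (V Vs : H -> H).
Hypotheses (VD : {morph V : x y / x + y}) (VZ : forall a x, V (a *: x) = a *: V x).
Hypotheses (V_adj : is_adjoint V Vs) (V_pure : pure_isometry V Vs).
Implicit Types (x y z : H) (a : R[i]).

Let V_iso : Defs.isometry V := V_pure.1.
Let VsD : {morph Vs : x y / x + y} := adjoint_morphD V_adj.
Let VsZ : forall a y, Vs (a *: y) = a *: Vs y := adjoint_scalable V_adj.
Let VsV : cancel V Vs := adjoint_isometryK V_iso V_adj.

Lemma bounded_linear_Vs : bounded_linear 1 Vs.
Proof. by split=> // y; rewrite mul1r (adjoint_isometry_contraction V_iso V_adj). Qed.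

Lemma hnorm_iterVs_le n y : hnorm (iter n Vs y) <= hnorm y.
Proof.
exact: (adjoint_isometry_contraction (isometry_iter n V_iso) (adjoint_iter n V_adj) y).
Qed.

Lemma iterVsV n : cancel (iter n V) (iter n Vs).
Proof. exact: adjoint_isometryK (isometry_iter n V_iso) (adjoint_iter n V_adj). Qed.

Lemma iterVs_iterV m n x : (m <= n)%N -> iter m Vs (iter n V x) = iter (n - m) V x.
Proof. by move=> le_mn; rewrite -{1}(subnKC le_mn) iterD iterVsV. Qed.

Lemma iterVs_iterV_ge m n x : (n <= m)%N -> iter m Vs (iter n V x) = iter (m - n) Vs x.
Proof. by move=> le_nm; rewrite -{1}(subnK le_nm) iterD iterVsV. Qed.

Lemma iterVs_cvg0 x : hcvg (fun n => iter n Vs x) 0.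
Proof. by move=> e /(V_pure.2 x) [N hN]; exists N => n /hN; rewrite subr0. Qed.

Definition Pran M x := iter M V (iter M Vs x).
Definition Pker M x := x - Pran M x.

Lemma PranE M x : Pran M x = x - Pker M x.
Proof. by rewrite /Pker opprB addrC subrK. Qed.

Lemma PkerD M : {morph Pker M : x y / x + y}.
Proof.
move=> x y; rewrite /Pker /Pran.
by rewrite !(iter_morphD _ VsD, iter_morphD _ VD) opprD addrACA.
Qed.

Lemma Pker_iterV M k y : (M <= k)%N -> Pker M (iter k V y) = 0.
Proof. by move=> le_Mk; rewrite /Pker /Pran iterVs_iterV // -iterD subnKC // subrr. Qed.

Lemma iterVs_Pker M k x : (M <= k)%N -> iter k Vs (Pker M x) = 0.
Proof.
move=> le_Mk; rewrite /Pker (morphDB (iter_morphD _ VsD)) /Pran.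
by rewrite iterVs_iterV_ge // -iterD subnK // subrr.
Qed.

Lemma PkerK K K' x : (K <= K')%N -> Pker K (Pker K' x) = Pker K x.
Proof. by move=> le_KK'; rewrite [Pker K' x]/Pker (morphDB (PkerD K)) Pker_iterV // subr0. Qed.

Lemma hnorm2_Pker M x : hnorm2 x = hnorm2 (Pker M x) + hnorm2 (Pran M x).
Proof.
have orth : hinner (Pker M x) (Pran M x) = 0.
  by rewrite hinnerC (adjoint_iter M V_adj) iterVs_Pker // hinner0r conjc0.
have -> : hnorm2 x = hnorm2 (Pker M x + Pran M x) by rewrite /Pker subrK.
by rewrite hnorm2D orth mulr0 addr0.
Qed.

Lemma hnorm_Pran M x : hnorm (Pran M x) = hnorm (iter M Vs x).
Proof. exact: isometry_iter. Qed.

Lemma bounded_linear_Pker M : bounded_linear 1 (Pker M).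
Proof.
split=> [|a x|x]; first exact: PkerD.
  by rewrite /Pker /Pran !(iter_scalable _ VsZ, iter_scalable _ VZ) scalerBr.
rewrite mul1r -(ler_pXn2r (_ : 0 < 2)%N) ?nnegrE ?hnorm_ge0 // !sqr_hnorm.
by rewrite (hnorm2_Pker M x) lerDl hnorm2_ge0.
Qed.

Lemma Vs_PkerS K z : Vs (Pker K.+1 z) = Pker K (Vs z).
Proof. by rewrite /Pker /Pran (morphDB VsD) iterS VsV iterSr. Qed.

Lemma Pker_cvg x : hcvg (fun K => Pker K x) x.
Proof.
apply/hcvgE; apply: (hcvg0_le (C := 1)) (iterVs_cvg0 x) => K.
by rewrite /Pker addrAC subrr add0r hnormN hnorm_Pran mul1r.
Qed.

Variables (X : H -> H) (CX : R).
Hypotheses (XD : {morph X : x y / x + y}) (XZ : forall a x, X (a *: x) = a *: X x).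
Hypothesis X_le : forall x, hnorm (X x) <= CX * hnorm x.

Definition shift_term j x := iter j.+1 V (X (iter j V x)) - iter j Vs (X (iter j.+1 Vs x)).
Definition shift_sum n x := \sum_(j < n.+1) shift_term j x.
Definition XV j x := iter j V (X (iter j V x)).
Definition XVs j x := iter j Vs (X (iter j Vs x)).

Lemma shift_sumS n x : shift_sum n.+1 x = shift_sum n x + shift_term n.+1 x.
Proof. by rewrite /shift_sum big_ord_recr. Qed.

Lemma shift_sumD n : {morph shift_sum n : x y / x + y}.
Proof.
move=> x y; rewrite /shift_sum -big_split; apply: eq_bigr => j _.
by rewrite /shift_term !(iter_morphD _ VD, iter_morphD _ VsD, XD) opprD addrACA.
Qed.

Lemma shift_sumZ n a x : shift_sum n (a *: x) = a *: shift_sum n x.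
Proof.
rewrite /shift_sum scaler_sumr; apply: eq_bigr => j _.
by rewrite /shift_term !(iter_scalable _ VZ, iter_scalable _ VsZ, XZ) scalerBr.
Qed.

Lemma shift_term_comm j x :
  Vs (shift_term j x) - shift_term j (V x) = (XV j x - XV j.+1 x) + (XVs j x - XVs j.+1 x).
Proof.
rewrite /shift_term /XV /XVs (morphDB VsD) (iterS j V) VsV -(iterS j Vs).
rewrite -(iterSr j V x) (iterSr j Vs (V x)) VsV.
by rewrite opprB addrACA [in RHS]addrACA; congr (_ + _); apply: addrC.
Qed.

Lemma shift_sum_comm n x :
  Vs (shift_sum n x) - shift_sum n (V x) = (X x - XV n.+1 x) + (X x - XVs n.+1 x).
Proof.
rewrite /shift_sum (big_morph Vs VsD (morphD0 VsD)) -sumrB.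
under eq_bigr do rewrite shift_term_comm.
by rewrite big_split /= (sumr_telescope_ord _ (XV^~ x)) (sumr_telescope_ord _ (XVs^~ x)).
Qed.

Lemma Pker_shift_term K M j y : (K <= j.+1)%N -> (M <= j.+1)%N ->
  Pker K (shift_term j (Pker M y)) = 0.
Proof.
move=> le_K le_M; rewrite /shift_term (morphDB (PkerD K)) Pker_iterV // iterVs_Pker //.
by rewrite (morphD0 XD) (morphD0 (iter_morphD j VsD)) (morphD0 (PkerD K)) subr0.
Qed.

Lemma Pker_shift_sum_stable K M n y : (maxn K M <= n)%N ->
  Pker K (shift_sum n (Pker M y)) = Pker K (shift_sum (maxn K M) (Pker M y)).
Proof.
move=> /subnKC <-; elim: (n - maxn K M)%N => [|d IH]; first by rewrite addn0.
by rewrite addnS shift_sumS PkerD IH Pker_shift_term ?addr0 //; lia.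
Qed.

Lemma XVs_cvg0 x : hcvg (fun n => XVs n x) 0.
Proof.
apply: (hcvg0_le (C := CX)) (iterVs_cvg0 x) => n.
exact: le_trans (hnorm_iterVs_le _ _) (X_le _).
Qed.

Variable B : R.
Hypotheses (B_gt0 : 0 < B) (shift_sum_le : forall n x, hnorm (shift_sum n x) <= B * hnorm x).

Lemma bounded_linear_shift_sum n : bounded_linear B (shift_sum n).
Proof. by split; [apply: shift_sumD | apply: shift_sumZ | apply: shift_sum_le]. Qed.

Lemma Pker_shift_sum_cauchy K x : hcauchy (fun n => Pker K (shift_sum n x)).
Proof.
move=> e e_gt0.
have [M hM] := V_pure.2 x _ (divr_gt0 e_gt0 (mulr_gt0 (ltr0Sn _ 1) B_gt0)).
have split_at p : (maxn K M <= p)%N -> Pker K (shift_sum p x) =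
    Pker K (shift_sum (maxn K M) (Pker M x)) + Pker K (shift_sum p (Pran M x)).
  by move=> le_p; rewrite -(Pker_shift_sum_stable x le_p) -PkerD -shift_sumD subrK.
have tail_le p : hnorm (Pker K (shift_sum p (Pran M x))) <= B * hnorm (iter M Vs x).
  rewrite -hnorm_Pran; apply: le_trans (shift_sum_le p _).
  by have [_ _] := bounded_linear_Pker K; move/(_ (shift_sum p (Pran M x))); rewrite mul1r.
exists (maxn K M) => m n le_m le_n.
rewrite (split_at m le_m) (split_at n le_n) opprD addrACA subrr add0r.
apply: le_lt_trans (hnormB_le _ _) _.
have := hM M (leqnn M); rewrite ltr_pdivlMr ?mulr_gt0 // => lt_M.
have := tail_le m; have := tail_le n; nra.
Qed.

Definition Wtrunc K x := hlim (fun n => Pker K (shift_sum n x)).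

Lemma Wtrunc_cvg K x : hcvg (fun n => Pker K (shift_sum n x)) (Wtrunc K x).
Proof. exact/hlimP/Pker_shift_sum_cauchy. Qed.

Lemma bounded_linear_Wtrunc K : bounded_linear B (Wtrunc K).
Proof.
apply: (bounded_linear_lim (T := fun n => Pker K \o shift_sum n)) (Wtrunc_cvg K) _ => n.
by rewrite -[B]mul1r; exact: bounded_linear_comp ler01 (bounded_linear_shift_sum n) (bounded_linear_Pker K).
Qed.

Lemma Pker_Wtrunc K K' x : (K <= K')%N -> Pker K (Wtrunc K' x) = Wtrunc K x.
Proof.
move=> le_KK'.
apply: hcvg_unique (hcvg_bounded_linear (bounded_linear_Pker K) (Wtrunc_cvg K' x)) _.
by apply: hcvg_eq_near (Wtrunc_cvg K x); exists 0%N => n _; rewrite PkerK.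
Qed.

Lemma hnorm2_Wtrunc K K' x : (K <= K')%N ->
  hnorm2 (Wtrunc K' x) = hnorm2 (Wtrunc K x) + hnorm2 (Wtrunc K' x - Wtrunc K x).
Proof. by move=> le_KK'; rewrite (hnorm2_Pker K) PranE Pker_Wtrunc. Qed.

Lemma Wtrunc_cauchy x : hcauchy (fun K => Wtrunc K x).
Proof.
move=> e e_gt0; have e2_gt0 : 0 < e / 2 by rewrite divr_gt0.
have Wtrunc_le K : hnorm2 (Wtrunc K x) <= (B * hnorm x) ^+ 2.
  rewrite -sqr_hnorm ler_pXn2r ?nnegrE ?hnorm_ge0 ?mulr_ge0 ?hnorm_ge0 ?(ltW B_gt0) //.
  by have [_ _] := bounded_linear_Wtrunc K; apply.
have [N hN] := ubounded_almost_max Wtrunc_le (exprn_gt0 2 e2_gt0).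
have near_N m : (N <= m)%N -> hnorm (Wtrunc m x - Wtrunc N x) < e / 2.
  move=> le_m; rewrite -(ltr_pXn2r (_ : 0 < 2)%N) ?nnegrE ?hnorm_ge0 ?(ltW e2_gt0) //.
  by have := hN m; rewrite sqr_hnorm (hnorm2_Wtrunc x le_m); lra.
exists N => m n le_m le_n; apply: le_lt_trans (hnorm_tri _ (Wtrunc N x) _) _.
have := near_N m le_m; have := near_N n le_n; rewrite (hdistC (Wtrunc N x)); lra.
Qed.

Definition W x := hlim (fun K => Wtrunc K x).

Lemma W_cvg x : hcvg (fun K => Wtrunc K x) (W x).
Proof. exact/hlimP/Wtrunc_cauchy. Qed.

Lemma bounded_linear_W : bounded_linear B W.
Proof. exact: bounded_linear_lim W_cvg bounded_linear_Wtrunc. Qed.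

Lemma Pker_W K x : Pker K (W x) = Wtrunc K x.
Proof.
apply: hcvg_unique (hcvg_bounded_linear (bounded_linear_Pker K) (W_cvg x)) _.
by apply: hcvg_eq_near (hcvg_cst (Wtrunc K x)); exists K => K' /Pker_Wtrunc.
Qed.

Lemma Wtrunc_comm K x : Vs (Wtrunc K.+1 x) - Wtrunc K (V x) = Pker K (X x + X x).
Proof.
apply: hcvg_unique
  (hcvgB (hcvg_bounded_linear bounded_linear_Vs (Wtrunc_cvg K.+1 x)) (Wtrunc_cvg K (V x))) _.
have := hcvgB (hcvg_cst (Pker K (X x + X x)))
  (hcvgS (hcvg_bounded_linear (bounded_linear_Pker K) (XVs_cvg0 x))).
rewrite (morphD0 (PkerD K)) subr0; apply: hcvg_eq_near; exists K => n le_Kn.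
rewrite Vs_PkerS -[in RHS](morphDB (PkerD K)) shift_sum_comm [in RHS]PkerD !(morphDB (PkerD K)) PkerD.
by rewrite [Pker K (XV _ _)]Pker_iterV ?subr0 ?addrA //; apply: leqW.
Qed.

Lemma W_comm x : Vs (W x) - W (V x) = X x + X x.
Proof.
apply/eqP; rewrite -subr_eq0; apply/eqP.
set u := _ - _ - _.
have Pker_u K : Pker K u = 0.
  by rewrite !(morphDB (PkerD K)) -Vs_PkerS !Pker_W Wtrunc_comm subrr.
apply: hcvg_unique (Pker_cvg u) _.
by apply: hcvg_eq_near (hcvg_cst 0); exists 0%N => K _; rewrite Pker_u.
Qed.

Lemma shift_equation_solvable :
  exists Z, bounded_op Z /\ forall x, X x = Vs (Z x) - Z (V x).
Proof.
exists (fun x => 2^-1 *: W x); split.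
  exact/bounded_linear_op/bounded_linear_comp/bounded_linear_scale/bounded_linear_W/Re_norm_ge0.
move=> x; rewrite VsZ -scalerBr W_comm -mulr2n -scalerMnr scalerMnl -mulr_natr.
by rewrite mulVf ?scale1r // pnatr_eq0.
Qed.

End PureIsometry.

Theorem proposition2p5 (R : realType) (H : hilbert R) (V Vs X : H -> H) :
  bounded_op V -> is_adjoint V Vs -> pure_isometry V Vs ->
  bounded_op X ->
  (exists M : R, forall (n : nat) (x : H),
     hnorm (\sum_(j < n.+1)
              (iter j.+1 V (X (iter j V x)) - iter j Vs (X (iter j.+1 Vs x))))
       <= M * hnorm x) ->
  exists Z : H -> H, bounded_op Z /\ forall x : H, X x = Vs (Z x) - Z (V x).
Proof.
move=> [VD [VZ _]] V_adj V_pure [XD [XZ [CX X_le]]] [M sum_le].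
have B_gt0 : 0 < `|M| + 1 by rewrite ltr_pwDr ?normr_ge0.
apply: (shift_equation_solvable VD VZ V_adj V_pure XD XZ X_le B_gt0) => n x.
apply: le_trans (sum_le n x) _; rewrite ler_wpM2r ?hnorm_ge0 //.
by have := ler_norm M; lra.
Qed.
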